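(* There exist a strongly connected digraph $D$ and a strongly connected spanning subdigraph $H$ of $D$ such that $src^*(D) > src^*(H)$.
   Context: All digraphs are finite, without loops or multiple arcs. For a strongly connected digraph $D$, an arc-colouring $\Gamma: A(D)\to\{1,\dots,k\}$ is strongly rainbow connected if for every ordered pair of distinct vertices $x,y$ there is a directed $xy$-path of length equal to the distance $d_D(x,y)$ (an $xy$-geodesic) whose arcs have pairwise distinct colours. The strong rainbow connection number $src^*(D)$ is the minimum $k$ for which $D$ admits a strongly rainbow connected arc-colouring with $k$ colours. *)

From mathcomp Require Import all_boot.
Set Implicit Arguments. Unset Strict Implicit. Unset Printing Implicit Defensive.

Section Digraphs.
Variable T : finType.

(* A digraph on vertex set T is an arc relation e : rel T; loopless means
   irreflexive.  Multiple arcs are impossible with a relation. *)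
Definition loopless (e : rel T) : Prop := irreflexive e.

Definition strongly_connected (e : rel T) : Prop :=
  forall x y : T, connect e x y.

Definition spanning_subdigraph (h e : rel T) : Prop := subrel h e.

(* A directed xy-path is x :: p with path e x p and last x p = y;
   its length is size p.  It is a geodesic if its length is minimal, i.e.
   equals the distance d(x,y). *)
Definition geodesic (e : rel T) (x y : T) (p : seq T) : Prop :=
  [/\ path e x p, last x p = y &
      forall q : seq T, path e x q -> last x q = y -> size p <= size q].

Definition path_arcs (x : T) (p : seq T) : seq (T * T) := zip (x :: p) p.

(* arc colouring with k colours (colours 'I_k stand for {1,...,k});
   values on non-arcs are irrelevant *)
Definition rainbow (k : nat) (c : T -> T -> 'I_k) (x : T) (p : seq T) : bool :=
  uniq [seq c a.1 a.2 | a <- path_arcs x p].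

Definition strongly_rainbow_connected (e : rel T) (k : nat)
    (c : T -> T -> 'I_k) : Prop :=
  forall x y : T, x != y -> exists p : seq T, geodesic e x y p /\ rainbow c x p.

Definition src_colourable (e : rel T) (k : nat) : Prop :=
  exists c : T -> T -> 'I_k, strongly_rainbow_connected e c.

(* is_src e k  <->  src^*(D) = k *)
Definition is_src (e : rel T) (k : nat) : Prop :=
  src_colourable e k /\ forall k', src_colourable e k' -> k <= k'.

End Digraphs.

From mathcomp Require Import all_boot zmodp.
Set Implicit Arguments. Unset Strict Implicit. Unset Printing Implicit Defensive.

(* In H = D - (0 -> 2) the only geodesic from 0 to 2 is 0 -> 1 -> 3 -> 4 -> 2, so
   H needs four colours, and an explicit colouring shows that four suffice. In D the
   shortcut 0 -> 2 turns 2 -> 4 -> 5 -> 1 -> 0, 5 -> 1 -> 0 -> 2 and 0 -> 2 -> 4 -> 5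
   into unique geodesics; any two of the arcs 0 -> 2, 1 -> 0, 2 -> 4, 4 -> 5, 5 -> 1 lie
   on one of them, so these five arcs get pairwise distinct colours, and five colours
   suffice. Enumerating all paths of each length makes geodesics, and hence both the
   colourings and these lower bounds, decidable by computation. *)

Lemma uniq_map_inj_in (A B : eqType) (f : A -> B) (s : seq A) :
  uniq (map f s) -> {in s &, injective f}.
Proof.
elim: s => [//|u s IH] /= /andP [fu_notin uniq_fs] a b.
rewrite !inE => /predU1P [-> | a_s] /predU1P [-> | b_s] // fab.
- by rewrite fab map_f in fu_notin.
- by rewrite -fab map_f in fu_notin.
- exact: IH.
Qed.

Section Geodesics.
Variables (T : finType) (e : rel T).

Fixpoint paths_from (x : T) (n : nat) : seq (seq T) :=
  if n is m.+1 then [seq z :: p | z <- [seq z <- enum T | e x z], p <- paths_from z m]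
  else [:: [::]].

Lemma mem_paths_from x n p : (p \in paths_from x n) = path e x p && (size p == n).
Proof.
elim: n x p => [|n IH] x [|z p] //=.
- by rewrite inE andbF.
- by apply/negbTE/allpairsPdep => -[w [q []]].
rewrite eqSS; apply/allpairsPdep/andP => [[w [q [+ + [-> ->]]]] | [/andP [xz pz] sz]].
  by rewrite mem_filter IH => /andP [-> _] /andP [-> ->].
by exists z, p; rewrite mem_filter mem_enum xz IH pz.
Qed.

(* [size (enum T)] is [#|T|], which does not evaluate under [vm_compute]; the
   bound is harmless since geodesics have fewer than [#|T|] arcs. *)
Definition dist (x y : T) : nat :=
  find (fun n => has (fun p => last x p == y) (paths_from x n)) (iota 0 (size (enum T))).

Definition geodesics (x y : T) : seq (seq T) :=
  [seq p <- paths_from x (dist x y) | last x p == y].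

Lemma dist_le_size x y p : path e x p -> last x p = y -> dist x y <= size p.
Proof.
move=> xp py; rewrite leqNgt; apply/negP => lt_p_dist.
have lt_p_bound : size p < size (enum T).
  apply: leq_trans lt_p_dist _.
  by rewrite -[X in _ <= X](size_iota 0 (size (enum T))) find_size.
have := before_find 0 lt_p_dist; rewrite nth_iota //= => /negbT/hasPn/(_ p).
by rewrite mem_paths_from xp eqxx py eqxx => /(_ isT).
Qed.

Lemma mem_geodesics x y p : p \in geodesics x y -> geodesic e x y p.
Proof.
rewrite mem_filter mem_paths_from => /and3P [/eqP py xp /eqP sz_p].
by split=> // q xq qy; rewrite sz_p; apply: dist_le_size.
Qed.

Lemma geodesic_mem_geodesics x y p q :
  p \in geodesics x y -> geodesic e x y q -> q \in geodesics x y.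
Proof.
move=> pg [xq qy q_min]; have [xp py p_min] := mem_geodesics pg.
move: pg; rewrite !mem_filter !mem_paths_from qy eqxx xq => /and3P [_ _ /eqP <-].
by rewrite eqn_leq p_min ?q_min.
Qed.

End Geodesics.

Section StrongRainbowConnection.
Variables (T : finType) (e : rel T).

Lemma src_colourable_strongly_connected k : src_colourable e k -> strongly_connected e.
Proof.
move=> [c rc] x y; have [<-|xy] := eqVneq x y; first exact: connect0.
by have [p [[xp <- _] _]] := rc x y xy; apply/connectP; exists p.
Qed.

Definition rainbow_geodesics k (c : T -> T -> 'I_k) : bool :=
  all (fun x => all (fun y => (x != y) ==> has (rainbow c x) (geodesics e x y)) (enum T))
    (enum T).

Lemma rainbow_geodesics_src k (c : T -> T -> 'I_k) :
  rainbow_geodesics c -> strongly_rainbow_connected e c.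
Proof.
move=> /allP rc x y xy.
have /hasP [p pg rp] := implyP (allP (rc x (mem_enum T x)) y (mem_enum T y)) xy.
by exists p; split=> //; apply: mem_geodesics.
Qed.

Lemma unique_geodesic_rainbow k (c : T -> T -> 'I_k) x y p :
  strongly_rainbow_connected e c -> x != y -> geodesics e x y = [:: p] ->
  rainbow c x p.
Proof.
move=> rc xy gxy; have [q [gq rq]] := rc x y xy.
have p_g : p \in geodesics e x y by rewrite gxy mem_head.
by have := geodesic_mem_geodesics p_g gq; rewrite gxy mem_seq1 => /eqP <-.
Qed.

Definition unique_geodesic_through (a b : T * T) : bool :=
  has (fun x => has (fun y => (x != y) &&
    if geodesics e x y is [:: p] then (a \in path_arcs x p) && (b \in path_arcs x p)
    else false) (enum T)) (enum T).

Definition pairwise_on_unique_geodesics (L : seq (T * T)) : bool :=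
  uniq L && all2rel (fun a b => (a == b) || unique_geodesic_through a b) L.

Lemma src_colourable_size_le k (L : seq (T * T)) :
  pairwise_on_unique_geodesics L -> src_colourable e k -> size L <= k.
Proof.
move=> /andP [uL /allrelP forced] [c rc].
pose col a := c a.1 a.2.
have col_inj : {in L &, injective col}.
  move=> a b aL bL; have /orP [/eqP //|] := forced a b aL bL.
  case/hasP=> x _ /hasP [y _ /andP [xy]].
  case gxy: (geodesics e x y) => [|p [|]] //= /andP [ap bp].
  exact: uniq_map_inj_in (unique_geodesic_rainbow rc xy gxy) a b ap bp.
have uniq_col : uniq (map col L) by rewrite map_inj_in_uniq.
have := @uniq_leq_size _ _ (enum 'I_k) uniq_col.
by rewrite size_map size_enum_ord; apply=> i _; rewrite mem_enum.
Qed.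

Definition src_certificate k (c : T -> T -> 'I_k) (L : seq (T * T)) : bool :=
  [&& rainbow_geodesics c, pairwise_on_unique_geodesics L & size L == k].

Lemma src_certificate_is_src k (c : T -> T -> 'I_k) L :
  src_certificate c L -> is_src e k.
Proof.
case/and3P=> rc forcedL /eqP sizeL.
split; first by exists c; apply: rainbow_geodesics_src.
by move=> k'; rewrite -sizeL; apply: src_colourable_size_le.
Qed.

End StrongRainbowConnection.

Definition digraph (arcs : seq (nat * nat)) : rel 'I_6 :=
  fun x y => (val x, val y) \in arcs.

Definition colouring k (arcs : seq (nat * nat)) (cols : seq nat) :
  'I_6 -> 'I_6 -> 'I_k.+1 :=
  fun x y => inZp (nth 0 cols (index (val x, val y) arcs)).

Definition arcs_of (s : seq (nat * nat)) : seq ('I_6 * 'I_6) :=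
  [seq (inZp a.1, inZp a.2) | a <- s].

Definition arcsD := [:: (0, 1); (1, 0); (0, 2); (1, 3); (2, 4); (3, 4); (4, 2); (4, 5); (5, 1)].
Definition arcsH := rem (0, 2) arcsD.

(* [enum 'I_n] is stuck under [vm_compute]: [insub] matches on the opaque proof
   [idP]. *)
Lemma enum_ord_inZp n : enum 'I_n.+1 = [seq inZp i | i <- iota 0 n.+1].
Proof.
apply: (inj_map val_inj); rewrite val_enum_ord -map_comp.
rewrite -[LHS]map_id; apply/eq_in_map => i; rewrite mem_iota => /= lt_i.
by rewrite modn_small.
Qed.

Ltac decide_src_certificate :=
  rewrite /src_certificate /rainbow_geodesics /pairwise_on_unique_geodesics
    /unique_geodesic_through /geodesics /dist /paths_from enum_ord_inZp;
  by vm_compute.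

Lemma is_src_D : is_src (digraph arcsD) 5.
Proof.
apply: (@src_certificate_is_src _ _ _ (colouring 4 arcsD [:: 0; 1; 0; 1; 2; 0; 1; 3; 4])
  (arcs_of [:: (0, 2); (1, 0); (2, 4); (4, 5); (5, 1)])).
decide_src_certificate.
Qed.

Lemma is_src_H : is_src (digraph arcsH) 4.
Proof.
apply: (@src_certificate_is_src _ _ _ (colouring 3 arcsH [:: 0; 1; 1; 2; 2; 3; 3; 0])
  (arcs_of [:: (0, 1); (1, 3); (3, 4); (4, 2)])).
decide_src_certificate.
Qed.

Theorem lemma1 :
  exists (T : finType) (e h : rel T),
    loopless e /\ strongly_connected e /\
    spanning_subdigraph h e /\ strongly_connected h /\
    exists kD kH : nat, is_src e kD /\ is_src h kH /\ kH < kD.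
Proof.
exists ('I_6 : finType), (digraph arcsD), (digraph arcsH).
split; first by case=> [[|[|[|[|[|[|n]]]]]] lt_n6].
split; first exact: src_colourable_strongly_connected is_src_D.1.
split; first by move=> x y; apply: mem_rem.
split; first exact: src_colourable_strongly_connected is_src_H.1.
by exists 5, 4; split; last split; [exact: is_src_D | exact: is_src_H |].
Qed.
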